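(* Let $G=(V_1,E_1)$ and $H=(V_2,E_2)$ be digraphs. If both $G$ and $H$ satisfy one of the following properties, then so do $G\mathbin{\dot\cup}H$ and $G\mathbin{\overline{\cup}}H$: (1) congruence $n$-permutability for some $n$; (2) congruence modularity; (3) the Hobby–McKenzie property.
   Context: Digraphs are finite and loopless. $G\mathbin{\dot\cup}H$ is the disjoint union digraph; $G\mathbin{\overline{\cup}}H$ is the same structure with two additional unary relations interpreted as $V_1$ and $V_2$. Polymorphisms of a structure are maps from tuples to elements preserving every relation coordinatewise; a structure has a property if it has polymorphisms satisfying the indicated equations for all values of the variables. Congruence $n$-permutable: ternary polymorphisms $p_0,\dots,p_n$ with $p_0(x,y,z)=x$, $p_i(x,x,y)=p_{i+1}(x,y,y)$ for $i<n$, $p_n(x,y,z)=z$. Congruence modular: ternary polymorphisms $s_0,\dots,s_{2n},p$ with $s_0(x,y,z)=x$, $s_i(x,y,x)=x$, $s_i(x,y,y)=s_{i+1}(x,y,y)$ for even $i<2n$, $s_i(x,x,y)=s_{i+1}(x,x,y)$ for odd $i<2n$, $s_{2n}(x,y,y)=p(x,y,y)$, $p(x,x,y)=y$. Hobby–McKenzie: there are $n\ge0$ and idempotent ternary polymorphisms $d_0,\dots,d_n,p,e_0,\dots,e_n$ with $x=d_0(x,y,z)$, $e_n(x,y,z)=z$; $d_i(x,y,y)=d_{i+1}(x,y,y)$ and $e_i(x,y,y)=e_{i+1}(x,y,y)$ for even $i<n$; $d_i(x,x,y)=d_{i+1}(x,x,y)$ and $e_i(x,x,y)=e_{i+1}(x,x,y)$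 for odd $i<n$; $d_n(x,y,y)=p(x,y,y)$ and $p(x,x,y)=e_0(x,x,y)$; $d_i(x,y,x)=d_{i+1}(x,y,x)$ for odd $i<n$ and $e_j(x,y,x)=e_{j+1}(x,y,x)$ for even $j<n$. *)

From Stdlib Require List.
From mathcomp Require Import all_boot.
Set Implicit Arguments. Unset Strict Implicit. Unset Printing Implicit Defensive.

Record struct := Struct {
  car :> finType;
  edge : rel car;
  unaries : seq (pred car) }.

Definition digraph (V : finType) (E : rel V) : struct := Struct E [::].

Definition loopless (V : finType) (E : rel V) : Prop := irreflexive E.

Definition sum_edge (V1 V2 : finType) (E1 : rel V1) (E2 : rel V2) : rel (V1 + V2)%type :=
  fun u v => match u, v with
             | inl a, inl b => E1 a b
             | inr a, inr b => E2 a b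
             | _, _ => false
             end.

Definition dunion (V1 V2 : finType) (E1 : rel V1) (E2 : rel V2) : struct :=
  @Struct (V1 + V2)%type (sum_edge E1 E2) [::].

Definition in_left (V1 V2 : finType) : pred (V1 + V2)%type :=
  fun u => if u is inl _ then true else false.
Definition in_right (V1 V2 : finType) : pred (V1 + V2)%type :=
  fun u => if u is inr _ then true else false.

Definition ounion (V1 V2 : finType) (E1 : rel V1) (E2 : rel V2) : struct :=
  @Struct (V1 + V2)%type (sum_edge E1 E2) [:: @in_left V1 V2; @in_right V1 V2].

Definition op3 (A : struct) := A -> A -> A -> A.

Definition poly3 (A : struct) (f : op3 A) : Prop :=
  (forall x1 y1 x2 y2 x3 y3 : A,
      edge x1 y1 -> edge x2 y2 -> edge x3 y3 ->
      edge (f x1 x2 x3) (f y1 y2 y3)) /\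
  (forall U, List.In U (unaries A) -> forall x1 x2 x3 : A,
      U x1 -> U x2 -> U x3 -> U (f x1 x2 x3)).

Definition idempotent3 (A : struct) (f : op3 A) : Prop := forall x : A, f x x x = x.

Definition n_permutable (A : struct) (n : nat) : Prop :=
  exists p : nat -> op3 A,
    (forall i, i <= n -> poly3 (p i)) /\
    (forall x y z : A, p 0 x y z = x) /\
    (forall i, i < n -> forall x y : A, p i x x y = p i.+1 x y y) /\
    (forall x y z : A, p n x y z = z).

Definition congruence_permutable (A : struct) : Prop := exists n, n_permutable A n.

(* congruence modular (Gumm terms) *)
Definition congruence_modular (A : struct) : Prop :=
  exists (n : nat) (s : nat -> op3 A) (p : op3 A),
    (forall i, i <= n.*2 -> poly3 (s i)) /\ poly3 p /\
    (forall x y z : A, s 0 x y z = x) /\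
    (forall i, i <= n.*2 -> forall x y : A, s i x y x = x) /\
    (forall i, i < n.*2 -> ~~ odd i -> forall x y : A, s i x y y = s i.+1 x y y) /\
    (forall i, i < n.*2 -> odd i -> forall x y : A, s i x x y = s i.+1 x x y) /\
    (forall x y : A, s n.*2 x y y = p x y y) /\
    (forall x y : A, p x x y = y).

Definition hobby_mckenzie (A : struct) : Prop :=
  exists (n : nat) (d : nat -> op3 A) (p : op3 A) (e : nat -> op3 A),
    (forall i, i <= n -> poly3 (d i) /\ idempotent3 (d i)) /\
    (forall i, i <= n -> poly3 (e i) /\ idempotent3 (e i)) /\
    poly3 p /\ idempotent3 p /\
    (forall x y z : A, d 0 x y z = x) /\
    (forall x y z : A, e n x y z = z) /\
    (forall i, i < n -> ~~ odd i -> forall x y : A,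
        d i x y y = d i.+1 x y y /\ e i x y y = e i.+1 x y y) /\
    (forall i, i < n -> odd i -> forall x y : A,
        d i x x y = d i.+1 x x y /\ e i x x y = e i.+1 x x y) /\
    (forall x y : A, d n x y y = p x y y) /\
    (forall x y : A, p x x y = e 0 x x y) /\
    (forall i, i < n -> odd i -> forall x y : A, d i x y x = d i.+1 x y x) /\
    (forall j, j < n -> ~~ odd j -> forall x y : A, e j x y x = e j.+1 x y x).

From mathcomp Require Import all_boot.
From mathcomp Require Import zify.
Set Implicit Arguments. Unset Strict Implicit. Unset Printing Implicit Defensive.

(* A polymorphism f of G and g of H combine into an operation on the union that
   acts as f on triples from V1, as g on triples from V2, and on mixed triples as a
   projection chosen from the side pattern of its arguments. An edge of the union
   lies inside one summand, so coordinatewise adjacent triples have the same side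
   pattern: the same projection is taken and adjacency is preserved, as are the
   unary relations V1 and V2. The chain identities then only have to be met by
   projections on the mixed patterns (x,x,y), (x,y,y), (x,y,x): the Gumm and
   Hobby-McKenzie terms act as the first or the third projection, their middle term
   p as the Mal'cev-like projection (x,x,y) |-> y, (x,y,y) |-> x, and an
   n-permutability chain switches from the first to the third projection at its
   last step. Chains of different lengths are first equalized by repeating their
   last term. *)

Definition ternop (T : Type) := T -> T -> T -> T.

(* The bodies of [n_permutable], [congruence_modular] and [hobby_mckenzie], over an
   arbitrary carrier and class [pol] of admissible operations. *)
Section Chains.
Variables (T : Type) (pol : ternop T -> Prop).

Definition perm_chain (n : nat) (p : nat -> ternop T) : Prop :=
  (forall i, i <= n -> pol (p i)) /\
  (forall x y z : T, p 0 x y z = x) /\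
  (forall i, i < n -> forall x y : T, p i x x y = p i.+1 x y y) /\
  (forall x y z : T, p n x y z = z).

Definition gumm_chain (n : nat) (s : nat -> ternop T) (p : ternop T) : Prop :=
  (forall i, i <= n.*2 -> pol (s i)) /\ pol p /\
  (forall x y z : T, s 0 x y z = x) /\
  (forall i, i <= n.*2 -> forall x y : T, s i x y x = x) /\
  (forall i, i < n.*2 -> ~~ odd i -> forall x y : T, s i x y y = s i.+1 x y y) /\
  (forall i, i < n.*2 -> odd i -> forall x y : T, s i x x y = s i.+1 x x y) /\
  (forall x y : T, s n.*2 x y y = p x y y) /\
  (forall x y : T, p x x y = y).

Definition idempotent (f : ternop T) : Prop := forall x : T, f x x x = x.

Definition hm_chain (n : nat) (d : nat -> ternop T) (p : ternop T) (e : nat -> ternop T) : Prop :=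
  (forall i, i <= n -> pol (d i) /\ idempotent (d i)) /\
  (forall i, i <= n -> pol (e i) /\ idempotent (e i)) /\
  pol p /\ idempotent p /\
  (forall x y z : T, d 0 x y z = x) /\
  (forall x y z : T, e n x y z = z) /\
  (forall i, i < n -> ~~ odd i -> forall x y : T,
      d i x y y = d i.+1 x y y /\ e i x y y = e i.+1 x y y) /\
  (forall i, i < n -> odd i -> forall x y : T,
      d i x x y = d i.+1 x x y /\ e i x x y = e i.+1 x x y) /\
  (forall x y : T, d n x y y = p x y y) /\
  (forall x y : T, p x x y = e 0 x x y) /\
  (forall i, i < n -> odd i -> forall x y : T, d i x y x = d i.+1 x y x) /\
  (forall j, j < n -> ~~ odd j -> forall x y : T, e j x y x = e j.+1 x y x).

End Chains.

Definition stretch (X : Type) (n : nat) (f : nat -> X) (i : nat) : X := f (minn i n).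

Section Stretch.
Variables (X : Type) (n : nat) (f : nat -> X).

Lemma stretch0 : stretch n f 0 = f 0.
Proof. by rewrite /stretch min0n. Qed.

Lemma stretch_last m : n <= m -> stretch n f m = f n.
Proof. by move=> le_nm; rewrite /stretch (minn_idPr le_nm). Qed.

Lemma stretch_all (P : X -> Prop) :
  (forall i, i <= n -> P (f i)) -> forall i, P (stretch n f i).
Proof. by move=> Pf i; apply: Pf; apply: geq_minr. Qed.

Variant stretch_succ_spec (i : nat) : nat -> nat -> Prop :=
  | StretchBelow of i < n : stretch_succ_spec i i i.+1
  | StretchAbove : stretch_succ_spec i n n.

Lemma stretch_succP i : stretch_succ_spec i (minn i n) (minn i.+1 n).
Proof.
have [lt_in|le_ni] := ltnP i n; first by rewrite (minn_idPl lt_in); constructor.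
by rewrite (minn_idPr (leqW le_ni)); constructor.
Qed.

End Stretch.

Section StretchChains.
Variables (T : Type) (pol : ternop T -> Prop) (n m : nat).
Hypothesis le_nm : n <= m.

Lemma perm_chain_stretch p : perm_chain pol n p -> perm_chain pol m (stretch n p).
Proof.
move=> [pol_p [p0 [p_step pn]]]; split; [|split; [|split]].
- by move=> i _; apply: stretch_all.
- by move=> x y z; rewrite stretch0.
- move=> i _ x y; rewrite /stretch; case: stretch_succP => [lt_in|]; first exact: p_step.
  by rewrite !pn.
- by move=> x y z; rewrite stretch_last.
Qed.

Lemma gumm_chain_stretch s p : gumm_chain pol n s p -> gumm_chain pol m (stretch n.*2 s) p.
Proof.
move=> [pol_s [pol_p [s0 [s_xyx [s_even [s_odd [s_last p_xxy]]]]]]].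
have le_nm2 : n.*2 <= m.*2 by rewrite leq_double.
split; [|split; [|split; [|split; [|split; [|split; [|split]]]]]] => //.
- by move=> i _; apply: stretch_all.
- by move=> x y z; rewrite stretch0.
- by move=> i _; apply: (stretch_all (P := fun f => forall x y, f x y x = x)).
- by move=> i _ ev_i x y; rewrite /stretch; case: stretch_succP => // lt_in; apply: s_even.
- by move=> i _ odd_i x y; rewrite /stretch; case: stretch_succP => // lt_in; apply: s_odd.
- by move=> x y; rewrite stretch_last.
Qed.

Lemma hm_chain_stretch d p e :
  hm_chain pol n d p e -> hm_chain pol m (stretch n d) p (stretch n e).
Proof.
move=> [pol_d [pol_e [pol_p [idem_p [d0 [en
         [hm_even [hm_odd [d_last [p_xxy [d_xyx e_xyx]]]]]]]]]]].
split; [|split; [|split; [|split; [|split; [|split; [|split; [|split; [|split; [|split; [|split]]]]]]]]]] => //.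
- by move=> i _; apply: (stretch_all (P := fun f => pol f /\ idempotent f)).
- by move=> i _; apply: (stretch_all (P := fun f => pol f /\ idempotent f)).
- by move=> x y z; rewrite stretch0.
- by move=> x y z; rewrite stretch_last.
- by move=> i _ ev_i x y; rewrite /stretch; case: stretch_succP => // lt_in; apply: hm_even.
- by move=> i _ odd_i x y; rewrite /stretch; case: stretch_succP => // lt_in; apply: hm_odd.
- by move=> x y; rewrite stretch_last.
- by move=> x y; rewrite stretch0.
- by move=> i _ odd_i x y; rewrite /stretch; case: stretch_succP => // lt_in; apply: d_xyx.
- by move=> i _ ev_i x y; rewrite /stretch; case: stretch_succP => // lt_in; apply: e_xyx.
Qed.

End StretchChains.

Variant arg3 := Arg1 | Arg2 | Arg3.

Definition proj3 (k : arg3) (T : Type) (x1 x2 x3 : T) : T :=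
  match k with Arg1 => x1 | Arg2 => x2 | Arg3 => x3 end.

Section SumOp.
Variables (V1 V2 : finType).

Definition sum_op3 (f : ternop V1) (g : ternop V2) (sel : bool -> bool -> bool -> arg3) :
    ternop (V1 + V2) := fun x1 x2 x3 =>
  match x1, x2, x3 with
  | inl a1, inl a2, inl a3 => inl (f a1 a2 a3)
  | inr b1, inr b2, inr b3 => inr (g b1 b2 b3)
  | _, _, _ => proj3 (sel (in_left x1) (in_left x2) (in_left x3)) x1 x2 x3
  end.

Lemma sum_op3_idempotent f g sel :
  idempotent f -> idempotent g -> idempotent (sum_op3 f g sel).
Proof. by move=> idem_f idem_g [a|b] /=; rewrite ?idem_f ?idem_g. Qed.

Variables (E1 : rel V1) (E2 : rel V2).

Lemma poly3_sum_ounion f g sel :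
  poly3 (A := digraph E1) f -> poly3 (A := digraph E2) g ->
  poly3 (A := ounion E1 E2) (sum_op3 f g sel).
Proof.
move=> [f_edge _] [g_edge _]; split.
  move=> [a1|b1] [a1'|b1'] [a2|b2] [a2'|b2'] [a3|b3] [a3'|b3'] //= e1 e2 e3;
    by [apply: f_edge | apply: g_edge | case: (sel _ _ _)].
by move=> U /= [<-|[<-|[]]] [a1|b1] [a2|b2] [a3|b3].
Qed.

Lemma poly3_sum_dunion f g sel :
  poly3 (A := digraph E1) f -> poly3 (A := digraph E2) g ->
  poly3 (A := dunion E1 E2) (sum_op3 f g sel).
Proof.
move=> pol_f pol_g; have [edge_sum _] := poly3_sum_ounion sel pol_f pol_g.
by split=> // U [].
Qed.

End SumOp.

(* On mixed patterns this is the first projection except at i = N and, on the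
   patterns (x,x,y), at i = N - 1; so [1 < N] is needed for [perm_sel0]. *)
Definition perm_sel (N i : nat) (s1 s2 s3 : bool) : arg3 :=
  if (i == N) || (i.+1 == N) && (s1 == s2) then Arg3 else Arg1.

Definition malcev_sel (s1 s2 s3 : bool) : arg3 := if s1 == s2 then Arg3 else Arg1.

Section PermSel.
Variables (N : nat) (s1 s2 s3 : bool).

Lemma perm_sel0 : 1 < N -> perm_sel N 0 s1 s2 s3 = Arg1.
Proof. by case: N => [|[|n]]. Qed.

Lemma perm_selN : perm_sel N N s1 s2 s3 = Arg3.
Proof. by rewrite /perm_sel eqxx. Qed.

Lemma perm_sel_step (T : Type) i (x y : T) : i < N -> s1 != s2 ->
  proj3 (perm_sel N i s1 s1 s2) x x y = proj3 (perm_sel N i.+1 s1 s2 s2) x y y.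
Proof.
move=> lt_iN /negbTE neq_s; rewrite /perm_sel eqxx neq_s (ltn_eqF lt_iN) andbT andbF orbF /=.
by case: (i.+1 == N).
Qed.

End PermSel.

Section SumChains.
Variables (V1 V2 : finType).
Variables (pol1 : ternop V1 -> Prop) (pol2 : ternop V2 -> Prop) (pol : ternop (V1 + V2) -> Prop).
Hypothesis pol_sum : forall f g sel, pol1 f -> pol2 g -> pol (sum_op3 f g sel).

Lemma perm_chain_sum N p1 p2 : 1 < N ->
  perm_chain pol1 N p1 -> perm_chain pol2 N p2 ->
  perm_chain pol N (fun i => sum_op3 (p1 i) (p2 i) (perm_sel N i)).
Proof.
move=> lt1N [pol_p1 [p1_0 [p1_step p1_N]]] [pol_p2 [p2_0 [p2_step p2_N]]].
split; [|split; [|split]].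
- by move=> i le_iN; apply: pol_sum; [apply: pol_p1 | apply: pol_p2].
- by move=> [x|x] [y|y] [z|z] /=; rewrite ?p1_0 ?p2_0 ?perm_sel0.
- move=> i lt_iN [x|x] [y|y] /=; rewrite ?p1_step ?p2_step //; exact: perm_sel_step.
- by move=> [x|x] [y|y] [z|z] /=; rewrite ?p1_N ?p2_N ?perm_selN.
Qed.

Lemma gumm_chain_sum n s1 q1 s2 q2 :
  gumm_chain pol1 n s1 q1 -> gumm_chain pol2 n s2 q2 ->
  gumm_chain pol n (fun i => sum_op3 (s1 i) (s2 i) (fun _ _ _ => Arg1))
    (sum_op3 q1 q2 malcev_sel).
Proof.
move=> [pol_s1 [pol_q1 [s1_0 [s1_xyx [s1_even [s1_odd [s1_last q1_xxy]]]]]]].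
move=> [pol_s2 [pol_q2 [s2_0 [s2_xyx [s2_even [s2_odd [s2_last q2_xxy]]]]]]].
split; [|split; [|split; [|split; [|split; [|split; [|split]]]]]].
- by move=> i le_in; apply: pol_sum; [apply: pol_s1 | apply: pol_s2].
- exact: pol_sum.
- by move=> [x|x] [y|y] [z|z] /=; rewrite ?s1_0 ?s2_0.
- by move=> i le_in [x|x] [y|y] /=; rewrite ?s1_xyx ?s2_xyx.
- by move=> i lt_in ev_i [x|x] [y|y] //=; rewrite (s1_even, s2_even).
- by move=> i lt_in odd_i [x|x] [y|y] //=; rewrite (s1_odd, s2_odd).
- by move=> [x|x] [y|y] /=; rewrite ?s1_last ?s2_last.
- by move=> [x|x] [y|y] /=; rewrite ?q1_xxy ?q2_xxy.
Qed.

Lemma hm_chain_sum n d1 q1 e1 d2 q2 e2 :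
  hm_chain pol1 n d1 q1 e1 -> hm_chain pol2 n d2 q2 e2 ->
  hm_chain pol n (fun i => sum_op3 (d1 i) (d2 i) (fun _ _ _ => Arg1))
    (sum_op3 q1 q2 malcev_sel) (fun i => sum_op3 (e1 i) (e2 i) (fun _ _ _ => Arg3)).
Proof.
move=> [pol_d1 [pol_e1 [pol_q1 [idem_q1 [d1_0 [e1_n
         [hm1_even [hm1_odd [d1_last [q1_xxy [d1_xyx e1_xyx]]]]]]]]]]].
move=> [pol_d2 [pol_e2 [pol_q2 [idem_q2 [d2_0 [e2_n
         [hm2_even [hm2_odd [d2_last [q2_xxy [d2_xyx e2_xyx]]]]]]]]]]].
have sum_pol_idem f g sel : pol1 f /\ idempotent f -> pol2 g /\ idempotent g ->
    pol (sum_op3 f g sel) /\ idempotent (sum_op3 f g sel).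
  by move=> [pol_f idem_f] [pol_g idem_g]; split; [apply: pol_sum | apply: sum_op3_idempotent].
split; [|split; [|split; [|split; [|split; [|split; [|split; [|split; [|split; [|split; [|split]]]]]]]]]].
- by move=> i le_in; apply: sum_pol_idem; [apply: pol_d1 | apply: pol_d2].
- by move=> i le_in; apply: sum_pol_idem; [apply: pol_e1 | apply: pol_e2].
- exact: pol_sum.
- exact: sum_op3_idempotent.
- by move=> [x|x] [y|y] [z|z] /=; rewrite ?d1_0 ?d2_0.
- by move=> [x|x] [y|y] [z|z] /=; rewrite ?e1_n ?e2_n.
- move=> i lt_in ev_i [x|x] [y|y] //=.
    by case: (hm1_even i lt_in ev_i x y) => -> ->.
  by case: (hm2_even i lt_in ev_i x y) => -> ->.
- move=> i lt_in odd_i [x|x] [y|y] //=.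
    by case: (hm1_odd i lt_in odd_i x y) => -> ->.
  by case: (hm2_odd i lt_in odd_i x y) => -> ->.
- by move=> [x|x] [y|y] /=; rewrite ?d1_last ?d2_last.
- by move=> [x|x] [y|y] /=; rewrite ?q1_xxy ?q2_xxy.
- by move=> i lt_in odd_i [x|x] [y|y] //=; rewrite (d1_xyx, d2_xyx).
- by move=> i lt_in ev_i [x|x] [y|y] //=; rewrite (e1_xyx, e2_xyx).
Qed.

End SumChains.

Section DigraphSums.
Variables (V1 V2 : finType) (E1 : rel V1) (E2 : rel V2).

Lemma congruence_permutable_sum :
  congruence_permutable (digraph E1) -> congruence_permutable (digraph E2) ->
  congruence_permutable (dunion E1 E2) /\ congruence_permutable (ounion E1 E2).
Proof.
move=> [n1 [p1 chain1]] [n2 [p2 chain2]].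
pose N := (n1 + n2).+2.
have [le_n1N le_n2N] : n1 <= N /\ n2 <= N by rewrite /N; lia.
have chain1' := perm_chain_stretch le_n1N chain1.
have chain2' := perm_chain_stretch le_n2N chain2.
split; exists N; eexists; apply: (perm_chain_sum _ _ chain1' chain2') => //.
- exact: poly3_sum_dunion.
- exact: poly3_sum_ounion.
Qed.

Lemma congruence_modular_sum :
  congruence_modular (digraph E1) -> congruence_modular (digraph E2) ->
  congruence_modular (dunion E1 E2) /\ congruence_modular (ounion E1 E2).
Proof.
move=> [n1 [s1 [q1 chain1]]] [n2 [s2 [q2 chain2]]].
have chain1' := gumm_chain_stretch (leq_addr n2 n1) chain1.
have chain2' := gumm_chain_stretch (leq_addl n1 n2) chain2.
split; exists (n1 + n2); do 2 eexists; apply: (gumm_chain_sum _ chain1' chain2').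
- exact: poly3_sum_dunion.
- exact: poly3_sum_ounion.
Qed.

Lemma hobby_mckenzie_sum :
  hobby_mckenzie (digraph E1) -> hobby_mckenzie (digraph E2) ->
  hobby_mckenzie (dunion E1 E2) /\ hobby_mckenzie (ounion E1 E2).
Proof.
move=> [n1 [d1 [q1 [e1 chain1]]]] [n2 [d2 [q2 [e2 chain2]]]].
have chain1' := hm_chain_stretch (leq_addr n2 n1) chain1.
have chain2' := hm_chain_stretch (leq_addl n1 n2) chain2.
split; exists (n1 + n2); do 3 eexists; apply: (hm_chain_sum _ chain1' chain2').
- exact: poly3_sum_dunion.
- exact: poly3_sum_ounion.
Qed.

End DigraphSums.

Theorem lemma4p2 (V1 V2 : finType) (E1 : rel V1) (E2 : rel V2)
  (hG : loopless E1) (hH : loopless E2) :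
  (congruence_permutable (digraph E1) -> congruence_permutable (digraph E2) ->
     congruence_permutable (dunion E1 E2) /\ congruence_permutable (ounion E1 E2)) /\
  (congruence_modular (digraph E1) -> congruence_modular (digraph E2) ->
     congruence_modular (dunion E1 E2) /\ congruence_modular (ounion E1 E2)) /\
  (hobby_mckenzie (digraph E1) -> hobby_mckenzie (digraph E2) ->
     hobby_mckenzie (dunion E1 E2) /\ hobby_mckenzie (ounion E1 E2)).
Proof.
split; first exact: congruence_permutable_sum.
by split; [exact: congruence_modular_sum | exact: hobby_mckenzie_sum].
Qed.
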